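(* Every ideal $J$ of $\widetilde{\mathbb{R}}_{sm}$ is convex: if $x\in J$ and $y\in\widetilde{\mathbb{R}}_{sm}$ with $0\le y\le x$, then $y\in J$.
   Context: Let $I=(0,1]$. $\widetilde{\mathbb{R}}_{sm}=\mathcal{E}_{M,sm}/\mathcal{N}_{sm}$ where $\mathcal{E}_{M,sm}$ is the set of smooth nets $(r_\varepsilon)_{\varepsilon\in I}\in\mathbb{R}^I$ with $|r_\varepsilon|=O(\varepsilon^{-N})$ for some $N$, and $\mathcal{N}_{sm}$ those with $|r_\varepsilon|=O(\varepsilon^m)$ for all $m$. For $r,s\in\widetilde{\mathbb{R}}_{sm}$, $r\le s$ means there are representatives with $r_\varepsilon\le s_\varepsilon$ for all $\varepsilon\in I$. *)

From Stdlib Require Import Reals.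
From Coquelicot Require Import Coquelicot.
Open Scope R_scope.

(* Nets (r_eps)_{eps in I}, I = (0,1], are represented by functions R -> R;
   only the values on I matter (all notions below only look at I). *)
Definition inI (e : R) : Prop := 0 < e <= 1.

Definition smooth_net (r : R -> R) : Prop :=
  exists g : R -> R, (forall e, inI e -> g e = r e) /\
    exists d, 0 < d /\ forall (n : nat) (x : R), 0 < x < 1 + d -> ex_derive_n g n x.

Definition moderate (r : R -> R) : Prop :=
  exists N : nat, exists C : R, exists e0 : R, 0 < e0 <= 1 /\
    forall e, 0 < e <= e0 -> Rabs (r e) <= C * (/ e) ^ N.

Definition negligible (r : R -> R) : Prop :=
  forall m : nat, exists C : R, exists e0 : R, 0 < e0 <= 1 /\
    forall e, 0 < e <= e0 -> Rabs (r e) <= C * e ^ m.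

Definition EMsm (r : R -> R) : Prop := smooth_net r /\ moderate r.

Definition Nsm (r : R -> R) : Prop := smooth_net r /\ negligible r.
Definition sm_eq (r s : R -> R) : Prop := Nsm (fun e => r e - s e).

Definition sm_le (r s : R -> R) : Prop :=
  exists r' s' : R -> R, EMsm r' /\ EMsm s' /\ sm_eq r r' /\ sm_eq s s' /\
    forall e, inI e -> r' e <= s' e.

(* A subset of the quotient R~_sm is encoded by the (saturated) set of its
   representatives.  An ideal: contains 0, closed under +, and under
   multiplication by arbitrary elements of R~_sm. *)
Definition sm_ideal (J : (R -> R) -> Prop) : Prop :=
  (forall x, J x -> EMsm x) /\
  (forall x x', J x -> EMsm x' -> sm_eq x x' -> J x') /\
  J (fun _ => 0) /\
  (forall x y, J x -> J y -> J (fun e => x e + y e)) /\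
  (forall a x, EMsm a -> J x -> J (fun e => a e * x e)).

(* If [0 <= y <= x] with [x] in the ideal, then up to negligible nets [|y| <= |x| + M] with
   [M^2 <= s] for a smooth negligible [s].  Let [rho = s/e^2 + exp(-1/e)]: it is smooth,
   positive and negligible, and [M <= sqrt rho].  The net [a = y x / (x^2 + rho)] is then
   smooth and bounded by [2], so [a x] lies in the ideal, while
   [|a x - y| = |y| rho / (x^2 + rho) <= 2 sqrt rho] is negligible; hence [y = a x] in the
   quotient and [y] lies in the ideal. *)

From Stdlib Require Import Reals Lra Lia Psatz.
From Coquelicot Require Import Coquelicot.
Open Scope R_scope.

Definition derivable_upto (b : R) (n : nat) (f : R -> R) : Prop :=
  forall k x, (k <= n)%nat -> 0 < x < b -> ex_derive_n f k x.

Section DerivableUpto.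
Variable b : R.

Lemma locally_in_interval x : 0 < x < b -> locally x (fun t => 0 < t < b).
Proof.
  intros Hx.
  assert (Hd : 0 < Rmin x (b - x)) by (apply Rmin_glb_lt; lra).
  exists (mkposreal _ Hd); intros t Ht.
  change (Rabs (t - x) < Rmin x (b - x)) in Ht.
  apply Rabs_def2 in Ht.
  pose proof (Rmin_l x (b - x)); pose proof (Rmin_r x (b - x)); lra.
Qed.

Lemma derivable_upto_ext n f g :
  (forall x, 0 < x < b -> f x = g x) -> derivable_upto b n f -> derivable_upto b n g.
Proof.
  intros Efg Hf k x Hk Hx; apply (ex_derive_n_ext_loc f g).
  - apply (filter_imp (fun t => 0 < t < b)); [exact Efg | exact (locally_in_interval x Hx)].
  - exact (Hf k x Hk Hx).
Qed.

Lemma derivable_upto_le m n f : (m <= n)%nat -> derivable_upto b n f -> derivable_upto b m f.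
Proof. intros Hmn Hf k x Hk; apply Hf; lia. Qed.

Lemma derivable_upto_S n f :
  derivable_upto b (S n) f <->
  (forall x, 0 < x < b -> ex_derive f x) /\ derivable_upto b n (Derive f).
Proof.
  assert (Hcomp : forall k t, Derive_n (Derive f) k t = Derive_n f (S k) t).
  { intros k t; change (Derive f) with (Derive_n f 1).
    rewrite Derive_n_comp; f_equal; lia. }
  split.
  - intros Hf; split.
    + intros x Hx; exact (Hf 1%nat x ltac:(lia) Hx).
    + intros [|k] x Hk Hx; [exact I|].
      apply (ex_derive_ext (Derive_n f (S k))); [intros t; symmetry; apply Hcomp|].
      exact (Hf (S (S k)) x ltac:(lia) Hx).
  - intros [Hf1 Hf] [|[|k]] x Hk Hx; [exact I | exact (Hf1 x Hx)|].
    apply (ex_derive_ext (Derive_n (Derive f) k)); [apply Hcomp|].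
    exact (Hf (S k) x ltac:(lia) Hx).
Qed.

Lemma derivable_upto_const n c : derivable_upto b n (fun _ => c).
Proof.
  revert c; induction n as [|n IHn]; intros c.
  - intros k x Hk _; replace k with 0%nat by lia; exact I.
  - apply derivable_upto_S; split; [intros; apply ex_derive_const|].
    apply (derivable_upto_ext n (fun _ => 0)); [intros; now rewrite Derive_const | apply IHn].
Qed.

Lemma derivable_upto_id n : derivable_upto b n (fun t => t).
Proof.
  apply (derivable_upto_le n (S n)); [lia|].
  apply derivable_upto_S; split; [intros; apply ex_derive_id|].
  apply (derivable_upto_ext n (fun _ => 1));
    [intros; symmetry; apply Derive_id | apply derivable_upto_const].
Qed.

Lemma derivable_upto_plus n : forall f g,
  derivable_upto b n f -> derivable_upto b n g -> derivable_upto b n (fun t => f t + g t).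
Proof.
  induction n as [|n IHn]; intros f g Hf Hg.
  - intros k x Hk _; replace k with 0%nat by lia; exact I.
  - apply derivable_upto_S in Hf as [Hf1 Hf], Hg as [Hg1 Hg].
    apply derivable_upto_S; split; [intros x Hx; apply (ex_derive_plus f g); auto|].
    apply (derivable_upto_ext n (fun t => Derive f t + Derive g t)); [|now apply IHn].
    intros x Hx; rewrite Derive_plus; auto.
Qed.

Lemma derivable_upto_mult n : forall f g,
  derivable_upto b n f -> derivable_upto b n g -> derivable_upto b n (fun t => f t * g t).
Proof.
  induction n as [|n IHn]; intros f g Hf Hg.
  - intros k x Hk _; replace k with 0%nat by lia; exact I.
  - assert (Hfn := derivable_upto_le n (S n) f ltac:(lia) Hf).
    assert (Hgn := derivable_upto_le n (S n) g ltac:(lia) Hg).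
    apply derivable_upto_S in Hf as [Hf1 Hf], Hg as [Hg1 Hg].
    apply derivable_upto_S; split; [intros x Hx; apply (ex_derive_mult f g); auto|].
    apply (derivable_upto_ext n (fun t => Derive f t * g t + f t * Derive g t)).
    + intros x Hx; rewrite Derive_mult; auto.
    + apply derivable_upto_plus; apply IHn; auto.
Qed.

Lemma derivable_upto_inv n : forall f, (forall x, 0 < x < b -> f x <> 0) ->
  derivable_upto b n f -> derivable_upto b n (fun t => / f t).
Proof.
  induction n as [|n IHn]; intros f Hnz Hf.
  - intros k x Hk _; replace k with 0%nat by lia; exact I.
  - assert (Hinv : derivable_upto b n (fun t => / f t))
      by (apply IHn; [exact Hnz | exact (derivable_upto_le n (S n) f ltac:(lia) Hf)]).
    apply derivable_upto_S in Hf as [Hf1 Hf].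
    apply derivable_upto_S; split; [intros x Hx; apply ex_derive_inv; auto|].
    apply (derivable_upto_ext n (fun t => (-1) * Derive f t * (/ f t * / f t))).
    + intros x Hx; rewrite Derive_inv; auto; field; auto.
    + apply derivable_upto_mult; apply derivable_upto_mult; auto.
      apply derivable_upto_const.
Qed.

Lemma derivable_upto_exp n : forall f,
  derivable_upto b n f -> derivable_upto b n (fun t => exp (f t)).
Proof.
  induction n as [|n IHn]; intros f Hf.
  - intros k x Hk _; replace k with 0%nat by lia; exact I.
  - assert (Hexp := IHn f (derivable_upto_le n (S n) f ltac:(lia) Hf)).
    apply derivable_upto_S in Hf as [Hf1 Hf].
    assert (Hd : forall x, 0 < x < b ->
      is_derive (fun t => exp (f t)) x (Derive f x * exp (f x))).
    { intros x Hx; apply (is_derive_comp exp f); [apply is_derive_exp|].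
      apply Derive_correct; auto. }
    apply derivable_upto_S; split; [intros x Hx; eexists; exact (Hd x Hx)|].
    apply (derivable_upto_ext n (fun t => Derive f t * exp (f t))).
    + intros x Hx; symmetry; apply is_derive_unique, Hd, Hx.
    + apply derivable_upto_mult; auto.
Qed.

End DerivableUpto.
Lemma smooth_netP r : smooth_net r <->
  exists g b, 1 < b /\ (forall e, inI e -> g e = r e) /\ forall n, derivable_upto b n g.
Proof.
  split.
  - intros (g & Hg & d & Hd & Hs); exists g, (1 + d); repeat split; [lra | exact Hg|].
    intros n k x _ Hx; apply Hs; exact Hx.
  - intros (g & b & Hb & Hg & Hs); exists g; split; [exact Hg|].
    exists (b - 1); split; [lra|]; intros n x Hx; apply (Hs n n x); [lia | lra].
Qed.

Lemma derivable_upto_shrink b b' n f :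
  b' <= b -> derivable_upto b n f -> derivable_upto b' n f.
Proof. intros Hb Hf k x Hk Hx; apply Hf; [exact Hk | lra]. Qed.

Lemma smooth_net_ext r s :
  (forall e, inI e -> r e = s e) -> smooth_net r -> smooth_net s.
Proof. intros Ers (g & Hg & Hs); exists g; split; [intros e He; rewrite Hg, Ers; auto | exact Hs]. Qed.

Lemma smooth_net_const c : smooth_net (fun _ => c).
Proof.
  apply smooth_netP; exists (fun _ => c), 2; repeat split; [lra | intros n; apply derivable_upto_const].
Qed.

Lemma smooth_net_id : smooth_net (fun e => e).
Proof.
  apply smooth_netP; exists (fun e => e), 2; repeat split; [lra | intros n; apply derivable_upto_id].
Qed.

Lemma smooth_net_lift1 (F : R -> R) :
  (forall b n f, derivable_upto b n f -> derivable_upto b n (fun t => F (f t))) ->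
  forall r, smooth_net r -> smooth_net (fun e => F (r e)).
Proof.
  intros HF r (g & b & Hb & Hg & Hs)%smooth_netP.
  apply smooth_netP; exists (fun t => F (g t)), b; repeat split; [exact Hb| |].
  - intros e He; now rewrite Hg.
  - intros n; apply HF, Hs.
Qed.

Lemma smooth_net_lift2 (F : R -> R -> R) :
  (forall b n f g, derivable_upto b n f -> derivable_upto b n g ->
     derivable_upto b n (fun t => F (f t) (g t))) ->
  forall r s, smooth_net r -> smooth_net s -> smooth_net (fun e => F (r e) (s e)).
Proof.
  intros HF r s (g & b & Hb & Hg & Hgs)%smooth_netP (h & c & Hc & Hh & Hhs)%smooth_netP.
  apply smooth_netP; exists (fun t => F (g t) (h t)), (Rmin b c); repeat split.
  - now apply Rmin_glb_lt.
  - intros e He; now rewrite Hg, Hh.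
  - intros n; apply HF; eapply derivable_upto_shrink;
      [apply Rmin_l | apply Hgs | apply Rmin_r | apply Hhs].
Qed.

Lemma smooth_net_plus r s :
  smooth_net r -> smooth_net s -> smooth_net (fun e => r e + s e).
Proof. apply (smooth_net_lift2 Rplus), derivable_upto_plus. Qed.

Lemma smooth_net_mult r s :
  smooth_net r -> smooth_net s -> smooth_net (fun e => r e * s e).
Proof. apply (smooth_net_lift2 Rmult), derivable_upto_mult. Qed.

Lemma smooth_net_minus r s :
  smooth_net r -> smooth_net s -> smooth_net (fun e => r e - s e).
Proof.
  intros Hr Hs; apply (smooth_net_ext (fun e => r e + (-1) * s e)); [intros; ring|].
  apply smooth_net_plus, smooth_net_mult; auto using smooth_net_const.
Qed.

Lemma smooth_net_exp r : smooth_net r -> smooth_net (fun e => exp (r e)).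
Proof. apply (smooth_net_lift1 exp), derivable_upto_exp. Qed.

(* The extension of [r] beyond [1] is continuous at [1], so it stays nonzero on some
   [(0, b)] with [b > 1]. *)
Lemma smooth_net_inv r :
  (forall e, inI e -> r e <> 0) -> smooth_net r -> smooth_net (fun e => / r e).
Proof.
  intros Hnz (g & b & Hb & Hg & Hs)%smooth_netP.
  assert (Hg1 : g 1 <> 0) by (rewrite Hg; [apply Hnz|]; split; lra).
  assert (Hcont : continuity_pt g 1).
  { apply continuity_pt_filterlim, (ex_derive_continuous (V := R_NormedModule)).
    exact (Hs 1%nat 1%nat 1 ltac:(lia) ltac:(lra)). }
  assert (Hpos : 0 < Rabs (g 1)) by (apply Rabs_pos_lt, Hg1).
  destruct (proj1 (continuity_pt_locally g 1) Hcont (mkposreal _ Hpos)) as [d Hd].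
  apply smooth_netP; exists (fun t => / g t), (Rmin b (1 + d)); repeat split.
  - apply Rmin_glb_lt; [exact Hb | pose proof (cond_pos d); lra].
  - intros e He; now rewrite Hg.
  - intros n; apply derivable_upto_inv.
    + intros x [Hx0 Hxb] Hgx.
      pose proof (Rmin_l b (1 + d)); pose proof (Rmin_r b (1 + d)).
      destruct (Rle_lt_dec x 1) as [Hx1 | Hx1].
      * apply (Hnz x); [split; lra | now rewrite <- Hg by (split; lra)].
      * assert (Hball : Rabs (x - 1) < d) by (rewrite Rabs_pos_eq; lra).
        specialize (Hd x Hball); simpl in Hd; rewrite Hgx, Rminus_0_l, Rabs_Ropp in Hd; lra.
    + eapply derivable_upto_shrink; [apply Rmin_l | apply Hs].
Qed.

Lemma negligible_nonneg_const f : negligible f -> forall m, exists C e0,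
  0 <= C /\ 0 < e0 <= 1 /\ forall e, 0 < e <= e0 -> Rabs (f e) <= C * e ^ m.
Proof.
  intros Hf m; destruct (Hf m) as (C & e0 & He0 & HC).
  exists (Rmax C 0), e0; repeat split; try apply Rmax_r; try lra.
  intros e He; eapply Rle_trans; [apply HC, He|].
  apply Rmult_le_compat_r; [apply pow_le; lra | apply Rmax_l].
Qed.

Lemma negligible_le f g :
  negligible f -> (forall e, inI e -> Rabs (g e) <= f e) -> negligible g.
Proof.
  intros Hf Hgf m; destruct (Hf m) as (C & e0 & He0 & HC).
  exists C, e0; split; [exact He0|]; intros e He.
  eapply Rle_trans; [apply Hgf; split; lra|].
  eapply Rle_trans; [apply Rle_abs | apply HC, He].
Qed.

Lemma negligible_plus f g :
  negligible f -> negligible g -> negligible (fun e => f e + g e).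
Proof.
  intros Hf Hg m.
  destruct (Hf m) as (C & e0 & He0 & HC), (Hg m) as (D & e1 & He1 & HD).
  exists (C + D), (Rmin e0 e1); split.
  - split; [now apply Rmin_glb_lt | pose proof (Rmin_l e0 e1); lra].
  - intros e He; pose proof (Rmin_l e0 e1); pose proof (Rmin_r e0 e1).
    eapply Rle_trans; [apply Rabs_triang|].
    pose proof (HC e ltac:(lra)); pose proof (HD e ltac:(lra)); lra.
Qed.

Lemma negligible_mult f g :
  negligible f -> negligible g -> negligible (fun e => f e * g e).
Proof.
  intros Hf Hg m.
  destruct (negligible_nonneg_const f Hf m) as (C & e0 & HC0 & He0 & HC).
  destruct (negligible_nonneg_const g Hg 0) as (D & e1 & HD0 & He1 & HD).
  exists (C * D), (Rmin e0 e1); split.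
  - split; [now apply Rmin_glb_lt | pose proof (Rmin_l e0 e1); lra].
  - intros e He; pose proof (Rmin_l e0 e1); pose proof (Rmin_r e0 e1).
    rewrite Rabs_mult.
    specialize (HC e ltac:(lra)); specialize (HD e ltac:(lra)); simpl in HD.
    assert (0 <= e ^ m) by (apply pow_le; lra).
    pose proof (Rabs_pos (f e)); pose proof (Rabs_pos (g e)); nra.
Qed.

Lemma negligible_scal c f : negligible f -> negligible (fun e => c * f e).
Proof.
  intros Hf m; destruct (Hf m) as (C & e0 & He0 & HC).
  exists (Rabs c * C), e0; split; [exact He0|]; intros e He.
  rewrite Rabs_mult, Rmult_assoc; apply Rmult_le_compat_l; [apply Rabs_pos | apply HC, He].
Qed.

Lemma negligible_div_eps f : negligible f -> negligible (fun e => f e / e).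
Proof.
  intros Hf m; destruct (Hf (S m)) as (C & e0 & He0 & HC).
  exists C, e0; split; [exact He0|]; intros e He.
  unfold Rdiv; rewrite Rabs_mult, Rabs_inv, (Rabs_pos_eq e) by lra.
  apply (Rmult_le_reg_r e); [lra|].
  rewrite Rmult_assoc, Rinv_l, Rmult_1_r by lra.
  replace (C * e ^ m * e) with (C * e ^ S m) by (simpl; ring); apply HC, He.
Qed.

Lemma pow_div_fact_le_exp x k : 0 <= x -> x ^ k / INR (Factorial.fact k) <= exp x.
Proof.
  intros Hx; eapply Rle_trans; [|apply (exp_ge_taylor x k Hx)].
  assert (Hterm : forall j, 0 <= x ^ j / INR (Factorial.fact j)).
  { intros j; apply Rdiv_le_0_compat; [apply pow_le, Hx | apply INR_fact_lt_0]. }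
  destruct k as [|k]; [simpl; lra|].
  rewrite tech5; pose proof (cond_pos_sum _ k Hterm); lra.
Qed.

Lemma negligible_exp_neg_inv : negligible (fun e => exp (- / e)).
Proof.
  intros m; exists (INR (Factorial.fact m)), 1; split; [lra|]; intros e He.
  rewrite Rabs_pos_eq by (left; apply exp_pos).
  assert (Hinv : 0 < / e) by (apply Rinv_0_lt_compat; lra).
  assert (Hterm : 0 < (/ e) ^ m / INR (Factorial.fact m))
    by (apply Rdiv_lt_0_compat; [apply pow_lt, Hinv | apply INR_fact_lt_0]).
  rewrite exp_Ropp.
  eapply Rle_trans; [apply Rinv_le_contravar, pow_div_fact_le_exp; [exact Hterm | lra]|].
  right; rewrite pow_inv; field.
  split; [apply pow_nonzero; lra | apply INR_fact_neq_0].
Qed.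

Lemma negligible_sqrt f : negligible f -> negligible (fun e => sqrt (f e)).
Proof.
  intros Hf m; destruct (negligible_nonneg_const f Hf (m + m)) as (C & e0 & HC0 & He0 & HC).
  exists (sqrt C), e0; split; [exact He0|]; intros e He.
  rewrite Rabs_pos_eq by apply sqrt_pos.
  assert (Hem : 0 <= e ^ m) by (apply pow_le; lra).
  rewrite <- (sqrt_square (e ^ m)), <- sqrt_mult by nra.
  apply sqrt_le_1_alt; eapply Rle_trans; [apply Rle_abs|].
  rewrite <- pow_add; apply HC, He.
Qed.

Lemma moderate_of_bounded r C : (forall e, inI e -> Rabs (r e) <= C) -> moderate r.
Proof.
  intros HC; exists 0%nat, C, 1; split; [lra|]; intros e He.
  rewrite pow_O, Rmult_1_r; apply HC, He.
Qed.

Section DominatedQuotient.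
Variables y X M r : R.
Hypothesis r_pos : 0 < r.
Hypothesis M_range : 0 <= M <= sqrt r.
Hypothesis y_dominated : Rabs y <= Rabs X + M.

Let abs_div_le a c : Rabs a <= c * (X * X + r) -> Rabs (a / (X * X + r)) <= c.
Proof.
  intros Ha; assert (HD : 0 < X * X + r) by nra.
  unfold Rdiv; rewrite Rabs_mult, Rabs_inv, (Rabs_pos_eq (X * X + r)) by lra.
  apply (Rmult_le_reg_r (X * X + r)); [exact HD|].
  rewrite Rmult_assoc, Rinv_l, Rmult_1_r by lra; exact Ha.
Qed.

Let abs_sq : Rabs X * Rabs X = X * X.
Proof. rewrite <- Rabs_mult; apply Rabs_pos_eq; nra. Qed.

Let sqrt_sq : sqrt r * sqrt r = r.
Proof. apply sqrt_sqrt; lra. Qed.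

Lemma dominated_quotient_le2 : Rabs (y * X / (X * X + r)) <= 2.
Proof.
  apply abs_div_le; rewrite Rabs_mult.
  pose proof (Rabs_pos X); pose proof (Rabs_pos y); pose proof abs_sq.
  pose proof (Rle_0_sqr (M - Rabs X)); unfold Rsqr in *.
  assert (Hsq : 2 * (M * Rabs X) <= M * M + X * X) by nra.
  assert (M * M <= r) by (rewrite <- sqrt_sq; apply Rmult_le_compat; lra).
  nra.
Qed.

Lemma dominated_quotient_defect : Rabs (y * X / (X * X + r) * X - y) <= 2 * sqrt r.
Proof.
  replace (y * X / (X * X + r) * X - y) with (- (y * r) / (X * X + r)) by (field; nra).
  apply abs_div_le; rewrite Rabs_Ropp, Rabs_mult, (Rabs_pos_eq r) by lra.
  pose proof (Rabs_pos X); pose proof (Rabs_pos y); pose proof (sqrt_pos r).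
  pose proof abs_sq; pose proof sqrt_sq.
  (* AM-GM: [2 |X| sqrt r <= X^2 + r]. *)
  pose proof (Rle_0_sqr (Rabs X - sqrt r)); unfold Rsqr in *.
  assert (Hamgm : 2 * (Rabs X * sqrt r) <= X * X + r) by nra.
  nra.
Qed.

End DominatedQuotient.

Definition regularize (s : R -> R) (e : R) : R := s e / e / e + exp (- / e).

Lemma regularize_gt s e : 0 <= s e -> 0 < e <= 1 -> s e < regularize s e.
Proof.
  intros Hs He; unfold regularize; pose proof (exp_pos (- / e)).
  assert (s e <= s e / e / e); [|lra].
  unfold Rdiv; rewrite Rmult_assoc, <- Rinv_mult.
  rewrite <- (Rmult_1_r (s e)) at 1; apply Rmult_le_compat_l; [exact Hs|].
  rewrite <- Rinv_1; apply Rinv_le_contravar; nra.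
Qed.

Lemma smooth_net_regularize s : smooth_net s -> smooth_net (regularize s).
Proof.
  intros Hs; assert (Hinv : smooth_net (fun e => / e)).
  { apply smooth_net_inv; [intros e He; unfold inI in He; lra | apply smooth_net_id]. }
  apply smooth_net_plus.
  - apply smooth_net_mult; [apply smooth_net_mult|]; assumption.
  - apply (smooth_net_ext (fun e => exp ((-1) * / e))); [intros; f_equal; ring|].
    apply smooth_net_exp, smooth_net_mult; [apply smooth_net_const | exact Hinv].
Qed.

Lemma negligible_regularize s : negligible s -> negligible (regularize s).
Proof.
  intros Hs; apply negligible_plus; [|apply negligible_exp_neg_inv].
  do 2 apply negligible_div_eps; exact Hs.
Qed.

Lemma sm_ideal_absorbs_dominated J X y s M :
  sm_ideal J -> J X -> EMsm y -> Nsm s ->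
  (forall e, inI e -> 0 <= M e /\ M e * M e <= s e /\ Rabs (y e) <= Rabs (X e) + M e) ->
  J y.
Proof.
  intros (HJE & HJsat & _ & _ & HJmul) HX Ey [Ss Ns] Hdom.
  assert (SX : smooth_net X) by apply (HJE X HX).
  set (rho := regularize s).
  assert (Hrho : forall e, inI e ->
    0 < rho e /\ 0 <= M e <= sqrt (rho e) /\ Rabs (y e) <= Rabs (X e) + M e).
  { intros e He; destruct (Hdom e He) as (HM & HMs & Hy).
    assert (Hs_rho : s e < rho e) by (apply regularize_gt; [nra | exact He]).
    repeat split; [nra | exact HM | | exact Hy].
    rewrite <- (sqrt_square (M e)) by exact HM; apply sqrt_le_1_alt; lra. }
  set (a := fun e => y e * X e / (X e * X e + rho e)).
  assert (Sa : smooth_net a).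
  { apply smooth_net_mult; [apply smooth_net_mult; [apply Ey | exact SX]|].
    apply smooth_net_inv.
    - intros e He; destruct (Hrho e He) as [Hpos _]; nra.
    - apply smooth_net_plus; [apply smooth_net_mult; exact SX|].
      apply smooth_net_regularize, Ss. }
  apply (HJsat (fun e => a e * X e)); [| exact Ey | split].
  - apply HJmul; [split; [exact Sa|] | exact HX].
    apply (moderate_of_bounded _ 2); intros e He.
    destruct (Hrho e He) as (Hpos & HM & Hy); exact (dominated_quotient_le2 _ _ _ _ Hpos HM Hy).
  - apply smooth_net_minus; [apply smooth_net_mult|]; [exact Sa | exact SX | apply Ey].
  - apply (negligible_le (fun e => 2 * sqrt (rho e))).
    + apply negligible_scal, negligible_sqrt, negligible_regularize, Ns.
    + intros e He; destruct (Hrho e He) as (Hpos & HM & Hy).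
      exact (dominated_quotient_defect _ _ _ _ Hpos HM Hy).
Qed.

Lemma Rabs_le_sandwich y X u v w :
  - u <= y - v -> y - w <= X -> Rabs y <= Rabs X + (Rabs u + Rabs v + Rabs w).
Proof. intros Hl Hh; unfold Rabs; repeat destruct Rcase_abs; lra. Qed.

Lemma Rabs_sum3_sq_le a b c :
  (Rabs a + Rabs b + Rabs c) * (Rabs a + Rabs b + Rabs c) <= 3 * (a * a + b * b + c * c).
Proof.
  rewrite <- (Rabs_pos_eq (a * a)), <- (Rabs_pos_eq (b * b)), <- (Rabs_pos_eq (c * c))
    by apply Rle_0_sqr.
  rewrite !Rabs_mult.
  pose proof (Rle_0_sqr (Rabs a - Rabs b)); pose proof (Rle_0_sqr (Rabs b - Rabs c)).
  pose proof (Rle_0_sqr (Rabs a - Rabs c)); unfold Rsqr in *; lra.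
Qed.

Theorem proposition4p23 (J : (R -> R) -> Prop) (HJ : sm_ideal J)
  (x y : R -> R) (Hx : J x) (Hy : EMsm y)
  (H0y : sm_le (fun _ => 0) y) (Hyx : sm_le y x) : J y.
Proof.
  destruct H0y as (l & y1 & _ & _ & [Su Nu] & [Sv Nv] & Hly1).
  destruct Hyx as (y2 & x2 & _ & Ex2 & [Sw Nw] & Hxx2 & Hy2x2).
  assert (Jx2 : J x2) by (apply (proj1 (proj2 HJ) x); assumption).
  set (u := fun e => 0 - l e); set (v := fun e => y e - y1 e); set (w := fun e => y e - y2 e).
  apply (sm_ideal_absorbs_dominated J x2 y (fun e => 3 * (u e * u e + v e * v e + w e * w e))
           (fun e => Rabs (u e) + Rabs (v e) + Rabs (w e)) HJ Jx2 Hy).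
  - split.
    + apply smooth_net_mult; [apply smooth_net_const|].
      repeat apply smooth_net_plus; apply smooth_net_mult; assumption.
    + apply negligible_scal; repeat apply negligible_plus; apply negligible_mult; assumption.
  - intros e He; split; [|split].
    + pose proof (Rabs_pos (u e)); pose proof (Rabs_pos (v e)); pose proof (Rabs_pos (w e)); lra.
    + apply Rabs_sum3_sq_le.
    + specialize (Hly1 e He); specialize (Hy2x2 e He).
      apply Rabs_le_sandwich; unfold u, v, w; lra.
Qed.
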